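(* For every $h\in R$, the binary representation of $h$ does not contain $11$ as a contiguous substring.
   Context: Stern's sequence $(a(n))_{n\ge0}$: $a(0)=0$, $a(1)=1$, $a(2n)=a(n)$, $a(2n+1)=a(n)+a(n+1)$; $s(n)=a(n+1)$ for $n\ge0$. $R$ is the set of record-setters of $s$, i.e. indices $v\ge0$ with $s(i)<s(v)$ for all $i<v$. The binary representation of a positive integer has no leading zeros; $0$ is represented by the string $0$. *)

From mathcomp Require Import all_boot.
Set Implicit Arguments. Unset Strict Implicit. Unset Printing Implicit Defensive.

(* Stern's diatomic sequence a(n), computed with fuel (fuel n.+1 suffices). *)
Fixpoint stern_fuel (fuel n : nat) : nat :=
  match fuel with
  | 0 => 0
  | f.+1 =>
    if n is 0 then 0 else if n == 1 then 1 else
    if ~~ odd n then stern_fuel f n./2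
    else stern_fuel f n./2 + stern_fuel f (n./2).+1
  end.

Definition stern (n : nat) : nat := stern_fuel n.+1 n.

Definition s (n : nat) : nat := stern n.+1.

Definition record_setter (v : nat) : Prop := forall i, i < v -> s i < s v.

Fixpoint bits_lsb (fuel n : nat) : seq bool :=
  match fuel with
  | 0 => [::]
  | f.+1 => if n is 0 then [::] else odd n :: bits_lsb f n./2
  end.

Definition binrep (n : nat) : seq bool :=
  if n == 0 then [:: false] else rev (bits_lsb n n).

Example stern_check : map stern (iota 0 10) = [:: 0; 1; 1; 2; 1; 3; 2; 3; 1; 4].
Proof. by []. Qed.
Example binrep_check : binrep 6 = [:: true; true; false] /\ binrep 0 = [:: false]
  /\ binrep 1 = [:: true] /\ binrep 8 = [:: true; false; false; false].
Proof. by []. Qed.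

(* If the binary expansion of h contains 11, then h = m 2^k + t with m = 3 (mod 4)
   and t < 2^k.  The identity a(2^k n + j) = a(2^k - j) a(n) + a(j) a(n+1) shows
   that a(m 2^k + i) <= a(m 2^k - i) for i <= 2^k; taking i = t + 1 gives
   s(h - 2(t+1)) >= s(h), so h is not a record-setter. *)
From mathcomp Require Import all_boot.
From mathcomp Require Import zify.

Lemma stern_fuelS f n : 1 < n ->
  stern_fuel f.+1 n =
  if odd n then stern_fuel f n./2 + stern_fuel f n./2.+1 else stern_fuel f n./2.
Proof. by case: n => [|[|n]] //= _; case: (odd n). Qed.

Lemma stern_fuel_ext f1 f2 n : n < f1 -> n < f2 ->
  stern_fuel f1 n = stern_fuel f2 n.
Proof.
elim: f1 f2 n => [//|f IH] [//|g] n lt_f lt_g.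
case: (ltnP 1 n) => [n_gt1 | ]; last by case: n {lt_f lt_g} => [|[]].
have := odd_double_half n; rewrite !stern_fuelS // -muln2.
by case: (odd n) => /= n_eq; rewrite (IH g n./2) ?(IH g n./2.+1); lia.
Qed.

Lemma stern_fuelE f n : n < f -> stern_fuel f n = stern n.
Proof. by move=> lt_f; apply: stern_fuel_ext. Qed.

Lemma stern0 : stern 0 = 0. Proof. by []. Qed.

Lemma stern1 : stern 1 = 1. Proof. by []. Qed.

Lemma stern_double n : stern (2 * n) = stern n.
Proof.
case: n => [//|n]; rewrite /stern stern_fuelS; last by lia.
have -> : odd (2 * n.+1) = false by rewrite oddM.
rewrite mul2n doubleK stern_fuelE //; lia.
Qed.

Lemma stern_double_add1 n : stern (2 * n + 1) = stern n + stern (n + 1).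
Proof.
case: n => [//|n]; rewrite /stern stern_fuelS; last by lia.
have -> : odd (2 * n.+1 + 1) by rewrite oddD oddM.
have -> : (2 * n.+1 + 1)./2 = n.+1 by rewrite addn1 mul2n /= uphalf_double.
by rewrite !stern_fuelE ?addn1 //; lia.
Qed.

Lemma stern_mul_pow2_add k n j : j <= 2 ^ k ->
  stern (2 ^ k * n + j) = stern (2 ^ k - j) * stern n + stern j * stern n.+1.
Proof.
elim: k j => [|k IH] j.
  rewrite expn0 mul1n; case: j => [|[|//]] _;
    by rewrite ?addn0 ?addn1 ?subn0 ?subnn stern1 ?stern0; lia.
rewrite expnS.
have [j' [-> | ->]] : exists j', j = 2 * j' \/ j = 2 * j' + 1.
  exists j./2; have := odd_double_half j; rewrite -muln2.
  by case: (odd j) => /= ej; [right | left]; lia.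
- move=> le_j.
  have -> : 2 * 2 ^ k * n + 2 * j' = 2 * (2 ^ k * n + j') by lia.
  have -> : 2 * 2 ^ k - 2 * j' = 2 * (2 ^ k - j') by lia.
  by rewrite !stern_double IH //; lia.
- move=> le_j.
  have -> : 2 * 2 ^ k * n + (2 * j' + 1) = 2 * (2 ^ k * n + j') + 1 by lia.
  have -> : 2 * 2 ^ k - (2 * j' + 1) = 2 * (2 ^ k - j' - 1) + 1 by lia.
  rewrite !stern_double_add1 -addnA !IH; try lia.
  have -> : 2 ^ k - j' - 1 + 1 = 2 ^ k - j' by lia.
  have -> : 2 ^ k - (j' + 1) = 2 ^ k - j' - 1 by lia.
  lia.
Qed.

Lemma stern_pow2_add k i : i <= 2 ^ k -> stern (2 ^ k + i) = stern (2 ^ k - i) + stern i.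
Proof.
by move=> /(@stern_mul_pow2_add k 1); rewrite muln1 stern1 (_ : stern 2 = 1) // !muln1.
Qed.

Lemma stern_reflect_le k m i : m %% 4 = 3 -> i <= 2 ^ k ->
  stern (m * 2 ^ k + i) <= stern (m * 2 ^ k - i).
Proof.
move=> m_mod4 le_i.
have [q ->] : exists q, m = 2 * (2 * q + 1) + 1 by exists (m %/ 4); lia.
have pow2S : 2 ^ k.+1 = 2 * 2 ^ k by rewrite expnS.
have -> : (2 * (2 * q + 1) + 1) * 2 ^ k + i = 2 ^ k.+1 * (2 * q + 1) + (2 ^ k + i) by nia.
have -> : (2 * (2 * q + 1) + 1) * 2 ^ k - i = 2 ^ k.+1 * (2 * q + 1) + (2 ^ k - i) by nia.
rewrite !stern_mul_pow2_add; try lia.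
have -> : 2 ^ k.+1 - (2 ^ k + i) = 2 ^ k - i by lia.
have -> : 2 ^ k.+1 - (2 ^ k - i) = 2 ^ k + i by lia.
have -> : (2 * q + 1).+1 = 2 * (q + 1) by lia.
(* the two sides now differ by a(i) a(q) *)
rewrite stern_pow2_add // stern_double stern_double_add1; nia.
Qed.

Lemma bits_lsbS f n : 0 < n -> bits_lsb f.+1 n = odd n :: bits_lsb f n./2.
Proof. by case: n. Qed.

Lemma infix11_bits_lsb f n :
  infix [:: true; true] (bits_lsb f n) -> exists k, n %/ 2 ^ k %% 4 = 3.
Proof.
elim: f n => [//|f IH] [//|n].
rewrite bits_lsbS // infix_consl => /orP[pre | /IH [k mod4]]; last first.
  by exists k.+1; rewrite expnS divnMA divn2.
exists 0; rewrite expn0 divn1.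
move: pre; rewrite prefix_cons; case: f {IH} => [|f] /andP[/eqP odd_n] //.
case: (posnP (n.+1)./2) => [-> // | half_gt0].
rewrite bits_lsbS // prefix_cons => /andP[/eqP odd_half _].
have := odd_double_half n.+1; have := odd_double_half (n.+1)./2.
by rewrite -odd_n -odd_half -!muln2 /=; lia.
Qed.

Lemma infix11_binrep n :
  infix [:: true; true] (binrep n) -> exists k, n %/ 2 ^ k %% 4 = 3.
Proof. by rewrite /binrep; case: eqP => // _; rewrite -infix_revLR; apply: infix11_bits_lsb. Qed.

Theorem mainTheorem6 (h : nat) :
  record_setter h -> ~~ infix [:: true; true] (binrep h).
Proof.
move=> record; apply/negP => /infix11_binrep [k mod4].
have h_eq : h = h %/ 2 ^ k * 2 ^ k + h %% 2 ^ k := divn_eq h (2 ^ k).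
have t_lt : h %% 2 ^ k < 2 ^ k by rewrite ltn_mod expn_gt0.
move: (h %/ 2 ^ k) (h %% 2 ^ k) mod4 h_eq t_lt => m t mod4 h_eq t_lt.
have m_big : 3 * 2 ^ k <= m * 2 ^ k by apply: leq_mul; lia.
have lt_h : h - 2 * t.+1 < h by lia.
have := record _ lt_h; rewrite /s.
have -> : h.+1 = m * 2 ^ k + t.+1 by lia.
have -> : (h - 2 * t.+1).+1 = m * 2 ^ k - t.+1 by lia.
by rewrite ltnNge stern_reflect_le.
Qed.
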